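(* Let $\mathbb{K}$ be any field and $n\geq 3$. Let $S$ be a linear subspace of $\mathrm{S}_n(\mathbb{K})$ in which every matrix has rank at most $2$. For $M\in S$ let $P(M)\in\mathrm{S}_{n-1}(\mathbb{K})$ be the upper-left $(n-1)\times(n-1)$ submatrix of $M$. Assume that $P(S)\subset\mathrm{WS}_{n-1,1,0}(\mathbb{K})$ and $\dim P(S)>2$. Then $S$ is congruent to a subspace of $\mathrm{WS}_{n,1,0}(\mathbb{K})$.
   Context: $\mathrm{S}_p(\mathbb{K})$ denotes the $p\times p$ symmetric matrices. $\mathrm{WS}_{p,1,0}(\mathbb{K})$ is the space of $M=(m_{i,j})\in\mathrm{S}_p(\mathbb{K})$ with $m_{i,j}=0$ whenever $i>1$ and $j>1$. Subsets $\mathcal{V},\mathcal{W}$ of $\mathrm{M}_n(\mathbb{K})$ are congruent if $\mathcal{V}=Q\mathcal{W}Q^T$ for some $Q\in\mathrm{GL}_n(\mathbb{K})$. *)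

From HB Require Import structures.
From mathcomp Require Import all_boot all_order all_algebra.
Set Implicit Arguments. Unset Strict Implicit. Unset Printing Implicit Defensive.
Import GRing.Theory.
Local Open Scope ring_scope.

Definition symmx (F : fieldType) (p : nat) (M : 'M[F]_p) : bool := M^T == M.

(* WS_{p,1,0}(K): symmetric M with m_{i,j} = 0 whenever i > 1 and j > 1
   (1-based indices); with 0-based ordinals: i <> 0 and j <> 0. *)
Definition WS10 (F : fieldType) (p : nat) (M : 'M[F]_p) : bool :=
  symmx M && [forall i : 'I_p, forall j : 'I_p,
                 ((0 < (i : nat))%N && (0 < (j : nat))%N) ==> (M i j == 0)].

Definition ulsub (F : fieldType) (m : nat) (M : 'M[F]_m.+1) : 'M[F]_m :=
  \matrix_(i < m, j < m) M (widen_ord (leqnSn m) i) (widen_ord (leqnSn m) j).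

Lemma ulsub_is_linear (F : fieldType) (m : nat) : linear (@ulsub F m).
Proof. by move=> a A B; apply/matrixP=> i j; rewrite !mxE. Qed.

HB.instance Definition _ (F : fieldType) (m : nat) :=
  GRing.isLinear.Build F 'M[F]_m.+1 'M[F]_m _ (@ulsub F m) (@ulsub_is_linear F m).

Definition Pimg (F : fieldType) (m : nat) (S : {vspace 'M[F]_m.+1}) : {vspace 'M[F]_m} :=
  (linfun (@ulsub F m) @: S)%VS.

From mathcomp Require Import all_boot all_order all_algebra.
From mathcomp Require Import ring.
From Stdlib Require Import Classical.

Set Implicit Arguments.
Unset Strict Implicit.
Unset Printing Implicit Defensive.
Local Open Scope ring_scope.
Import GRing.Theory.

(* For M in S let b and d be the first and last rows of M restricted to the
   middle indices 2..n-1.  The middle block of M vanishes, so the 3x3 minors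
   of the rank-2 matrix M force b and d to be proportional.  Since P(M) is
   determined by m_11 and b, dim P(S) > 2 means that the b's span a plane;
   polarising the proportionality then gives d = lam b for one scalar lam and
   all M in S, and one more minor kills m_nn - 2 lam m_1n + lam^2 m_11.
   Subtracting lam times the first row and column from the last ones thus
   moves S into WS_{n,1,0}. *)

Lemma det_mx33 (F : comPzRingType) (A : 'M[F]_3) : \det A =
  A 0 0 * (A 1 1 * A 2 2 - A 1 2 * A 2 1) - A 0 1 * (A 1 0 * A 2 2 - A 1 2 * A 2 0)
  + A 0 2 * (A 1 0 * A 2 1 - A 1 1 * A 2 0).
Proof.
do 3 rewrite !(expand_det_row _ ord0) !big_ord_recl !big_ord0 /cofactor.
rewrite !det_mx00 !mxE /=.
pose B i j := A (inord i) (inord j).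
have -> : A = \matrix_(i, j) B i j by apply/matrixP=> i j; rewrite mxE /B !inord_val.
rewrite !mxE /bump /=.
change (1 %% 3)%N with 1%N; change ((1 %% 3 + 1 %% 3) %% 3)%N with 2%N.
ring.
Qed.

Lemma minor33_rank_le2 (F : fieldType) n (M : 'M[F]_n) (r0 r1 r2 c0 c1 c2 : 'I_n) :
  (\rank M <= 2)%N ->
  M r0 c0 * (M r1 c1 * M r2 c2 - M r1 c2 * M r2 c1)
  - M r0 c1 * (M r1 c0 * M r2 c2 - M r1 c2 * M r2 c0)
  + M r0 c2 * (M r1 c0 * M r2 c1 - M r1 c1 * M r2 c0) = 0.
Proof.
move=> rankM.
pose A := mxsub (nth r0 [:: r0; r1; r2]) (nth c0 [:: c0; c1; c2]) M : 'M_3.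
have rankA : (\rank A <= 2)%N.
  rewrite /A mxsubrc; apply: leq_trans (mxrankS (rowsub_sub _ _)) _.
  by rewrite -[M]mulmx1 -mulmx_colsub; apply: leq_trans (mxrankM_maxl _ _) _.
have : \det A = 0.
  apply/eqP; apply: contraTT rankA => detA.
  by rewrite mxrank_unit // unitmxE unitfE.
rewrite det_mx33 !mxE /=.
by change (1 %% 3)%N with 1%N; change ((1 %% 3 + 1 %% 3) %% 3)%N with 2%N.
Qed.

Lemma mul_delta_mx_l (F : fieldType) n (a b : 'I_n) (A : 'M[F]_n) :
  delta_mx a b *m A = \matrix_(i, j) ((i == a)%:R * A b j).
Proof.
apply/matrixP=> i j; rewrite !mxE (bigD1 b) //= big1 ?addr0 => [|k kb].
  by rewrite mxE eqxx andbT.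
by rewrite mxE (negbTE kb) andbF mul0r.
Qed.

Lemma mul_delta_mx_r (F : fieldType) n (a b : 'I_n) (A : 'M[F]_n) :
  A *m delta_mx a b = \matrix_(i, j) (A i a * (j == b)%:R).
Proof.
apply/matrixP=> i j; rewrite !mxE (bigD1 a) //= big1 ?addr0 => [|k ka].
  by rewrite mxE eqxx.
by rewrite mxE (negbTE ka) mulr0.
Qed.

Definition transvection (F : fieldType) n (a b : 'I_n) (lam : F) : 'M[F]_n :=
  1%:M - lam *: delta_mx a b.

Lemma transvection_unit (F : fieldType) n (a b : 'I_n) (lam : F) :
  a != b -> transvection a b lam \in unitmx.
Proof.
move=> ab.
suff /mulmx1_unit[] : transvection a b lam *m (1%:M + lam *: delta_mx a b) = 1%:M by [].
rewrite mulmxDr mulmx1 mulmxBl mul1mx -scalemxAl -scalemxAr mul_delta_mx_l.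
by apply/matrixP=> i j; rewrite !mxE [b == a]eq_sym (negbTE ab) /=; ring.
Qed.

Lemma transvection_congr_entry (F : fieldType) n (M : 'M[F]_n) (a b : 'I_n) lam i j :
  (transvection a b lam *m M *m (transvection a b lam)^T) i j =
  M i j - lam * (i == a)%:R * M b j - lam * (j == a)%:R * M i b
  + lam * lam * (i == a)%:R * (j == a)%:R * M b b.
Proof.
have -> : (transvection a b lam)^T = 1%:M - lam *: delta_mx b a.
  by apply/matrixP=> x y; rewrite !mxE eq_sym andbC.
rewrite /transvection !mulmxBr !mulmxBl !mul1mx !mulmx1 -!scalemxAl -!scalemxAr.
by rewrite !mul_delta_mx_l !mul_delta_mx_r !mxE; ring.
Qed.

Lemma cross_eq0 (F : fieldType) (u0 u1 v0 v1 x0 x1 : F) :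
  u0 != 0 -> u0 * v1 - u1 * v0 != 0 ->
  u0 * x1 = u1 * x0 -> v0 * x1 = v1 * x0 -> x0 = 0.
Proof.
move=> u0N0 uvN0 ux vx.
have : (u0 * v1 - u1 * v0) * x0 = u0 * (v1 * x0 - v0 * x1) + v0 * (u0 * x1 - u1 * x0).
  by ring.
rewrite ux vx !subrr !mulr0 addr0 => /eqP.
by rewrite mulf_eq0 (negbTE uvN0) => /eqP.
Qed.
Definition widen1 n (i : 'I_n) : 'I_n.+1 := widen_ord (leqnSn n) i.

Lemma widen1_ord0 n : widen1 (ord0 : 'I_n.+1) = ord0.
Proof. exact: val_inj. Qed.

Lemma widen1_neq_max n (i : 'I_n) : (widen1 i == ord_max) = false.
Proof. by rewrite -val_eqE /= ltn_eqF. Qed.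

Lemma lift_max_widen1 n (i : 'I_n) : lift ord_max i = widen1 i.
Proof. exact/val_inj/lift_max. Qed.

Lemma ord_gt0_neq0 n (i : 'I_n.+1) : (0 < i)%N -> (i == ord0) = false.
Proof. by move=> i_gt0; rewrite -val_eqE /= gtn_eqF. Qed.

(* 0-based: ord0 and ord_max are the first and last indices of an (n+2)x(n+2)
   matrix, and widen1 i with 0 < i runs over the middle ones. *)
Definition top_entry (F : fieldType) n (M : 'M[F]_n.+2) (i : 'I_n.+1) : F :=
  M ord0 (widen1 i).
Definition bot_entry (F : fieldType) n (M : 'M[F]_n.+2) (i : 'I_n.+1) : F :=
  M ord_max (widen1 i).

Lemma top_entryD (F : fieldType) n (M N : 'M[F]_n.+2) i :
  top_entry (M + N) i = top_entry M i + top_entry N i.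
Proof. exact: mxE. Qed.

Lemma bot_entryD (F : fieldType) n (M N : 'M[F]_n.+2) i :
  bot_entry (M + N) i = bot_entry M i + bot_entry N i.
Proof. exact: mxE. Qed.

Section BorderedRankTwo.
Variables (F : fieldType) (m : nat) (S : {vspace 'M[F]_m.+2}).
Hypothesis S_sym : forall M, M \in S -> symmx M.
Hypothesis S_rank : forall M, M \in S -> (\rank M <= 2)%N.
Hypothesis PS_WS : forall N, N \in Pimg S -> WS10 N.

Lemma S_symE M i j : M \in S -> M i j = M j i.
Proof. by move=> /S_sym /eqP symM; rewrite -{1}symM mxE. Qed.

Lemma S_inner0 M (i j : 'I_m.+1) : M \in S -> (0 < i)%N -> (0 < j)%N ->
  M (widen1 i) (widen1 j) = 0.
Proof.
move=> MS i_gt0 j_gt0.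
have /andP[_ /forallP/(_ i)/forallP/(_ j)] := PS_WS (memv_img (linfun (@ulsub F _)) MS).
by rewrite i_gt0 j_gt0 lfunE /= mxE => /eqP.
Qed.

Lemma top_bot_cross M (i j : 'I_m.+1) : M \in S -> (0 < i)%N -> (0 < j)%N ->
  top_entry M i * bot_entry M j = top_entry M j * bot_entry M i.
Proof.
move=> MS i_gt0 j_gt0.
have minor (k : 'I_m.+1) : (0 < k)%N ->
    top_entry M k * (top_entry M i * bot_entry M j - top_entry M j * bot_entry M i) = 0.
  move=> k_gt0.
  have := minor33_rank_le2 ord0 (widen1 i) (widen1 j) ord0 (widen1 k) ord_max (S_rank MS).
  rewrite !S_inner0 // (S_symE (widen1 i) ord0) // (S_symE (widen1 j) ord0) //.
  rewrite (S_symE (widen1 i) ord_max) // (S_symE (widen1 j) ord_max) // => h.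
  by rewrite -oppr0 -h /top_entry /bot_entry; ring.
have [Mi0|Mi] := eqVneq (top_entry M i) 0.
  have [Mj0|Mj] := eqVneq (top_entry M j) 0; first by rewrite Mi0 Mj0 !mul0r.
  by have /eqP := minor j j_gt0; rewrite mulf_eq0 (negbTE Mj) subr_eq0 => /eqP.
by have /eqP := minor i i_gt0; rewrite mulf_eq0 (negbTE Mi) subr_eq0 => /eqP.
Qed.

Lemma top_bot_cross_polar M N (i j : 'I_m.+1) :
  M \in S -> N \in S -> (0 < i)%N -> (0 < j)%N ->
  top_entry M i * bot_entry N j + top_entry N i * bot_entry M j =
  top_entry M j * bot_entry N i + top_entry N j * bot_entry M i.
Proof.
move=> MS NS i_gt0 j_gt0.
have := top_bot_cross (memvD MS NS) i_gt0 j_gt0; rewrite !top_entryD !bot_entryD => hMN.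
apply: (addIr (top_entry M i * bot_entry M j + top_entry N i * bot_entry N j)).
rewrite [in RHS](top_bot_cross MS i_gt0 j_gt0) [in RHS](top_bot_cross NS i_gt0 j_gt0).
transitivity ((top_entry M i + top_entry N i) * (bot_entry M j + bot_entry N j)).
  by ring.
by rewrite hMN; ring.
Qed.

Lemma dim_Pimg_le2 N : N \in S ->
  (forall M, M \in S -> exists c,
     forall t : 'I_m.+1, (0 < t)%N -> top_entry M t = c * top_entry N t) ->
  (\dim (Pimg S) <= 2)%N.
Proof.
move=> NS topN.
suff sub : (Pimg S <= <<[:: ulsub N; delta_mx ord0 ord0]>>)%VS.
  exact: leq_trans (dimvS sub) (dim_span _).
apply/subvP=> P /memv_imgP[M MS ->]; rewrite lfunE /=.
have [c Mc] := topN M MS.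
suff -> : ulsub M = c *: ulsub N + (M ord0 ord0 - c * N ord0 ord0) *: delta_mx ord0 ord0.
  by rewrite memvD // memvZ // memv_span // !inE eqxx ?orbT.
apply/matrixP=> i j; rewrite !mxE -/(widen1 i) -/(widen1 j).
have [i0|i_gt0] := posnP i; have [j0|j_gt0] := posnP j.
- have -> : i = ord0 by apply: val_inj.
  have -> : j = ord0 by apply: val_inj.
  by rewrite eqxx widen1_ord0 mulr1 addrC subrK.
- have -> : i = ord0 by apply: val_inj.
  by rewrite widen1_ord0 (ord_gt0_neq0 j_gt0) andbF mulr0 addr0; apply: Mc.
- have -> : j = ord0 by apply: val_inj.
  rewrite widen1_ord0 (ord_gt0_neq0 i_gt0) mulr0 addr0 !(S_symE (widen1 i) ord0) //.
  exact: Mc.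
- by rewrite !S_inner0 // (ord_gt0_neq0 i_gt0) /= !mulr0 addr0.
Qed.

Lemma exists_pivot : (2 < \dim (Pimg S))%N ->
  exists M1 M2 (i0 j0 : 'I_m.+1), [/\ M1 \in S, M2 \in S, (0 < i0)%N && (0 < j0)%N,
    top_entry M1 i0 != 0 &
    top_entry M1 i0 * top_entry M2 j0 - top_entry M1 j0 * top_entry M2 i0 != 0].
Proof.
rewrite ltnNge => /negP dimPS; apply: NNPP => no_pivot; apply: dimPS.
have cross M1 M2 (i j : 'I_m.+1) : M1 \in S -> M2 \in S -> (0 < i)%N -> (0 < j)%N ->
    top_entry M1 i * top_entry M2 j = top_entry M1 j * top_entry M2 i.
  move=> M1S M2S i_gt0 j_gt0; apply/eqP; rewrite -subr_eq0.
  apply/negPn/negP => minorN0; apply: no_pivot.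
  have [M1i0|M1i] := eqVneq (top_entry M1 i) 0; last by exists M1, M2, i, j; rewrite i_gt0.
  exists M1, M2, j, i; split; rewrite ?j_gt0 //; last by rewrite -oppr_eq0 opprB.
  by apply: contraNneq minorN0 => M1j0; rewrite M1i0 M1j0 !mul0r subrr.
have [[N [k [NS k_gt0 Nk]]] | top0] :=
  classic (exists N (k : 'I_m.+1), [/\ N \in S, (0 < k)%N & top_entry N k != 0]).
  apply: (dim_Pimg_le2 NS) => M MS; exists (top_entry M k / top_entry N k) => t t_gt0.
  by rewrite mulrAC (cross M N k t) ?mulfK.
apply: (dim_Pimg_le2 (mem0v S)) => M MS; exists 0 => t t_gt0.
rewrite mul0r; apply/eqP/negPn/negP => Mt; apply: top0.
by exists M, t.
Qed.

Section Pivot.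
Variables (M1 M2 : 'M[F]_m.+2) (i0 j0 : 'I_m.+1).
Hypotheses (M1S : M1 \in S) (M2S : M2 \in S) (i0_gt0 : (0 < i0)%N) (j0_gt0 : (0 < j0)%N).
Hypothesis M1i0 : top_entry M1 i0 != 0.
Hypothesis M12_indep :
  top_entry M1 i0 * top_entry M2 j0 - top_entry M1 j0 * top_entry M2 i0 != 0.

Let lam := bot_entry M1 i0 / top_entry M1 i0.
Let dev (M : 'M[F]_m.+2) (t : 'I_m.+1) := bot_entry M t - lam * top_entry M t.

Lemma dev_cross_of N M (i j : 'I_m.+1) : N \in S -> M \in S ->
  (forall t : 'I_m.+1, (0 < t)%N -> dev N t = 0) -> (0 < i)%N -> (0 < j)%N ->
  top_entry N i * dev M j = top_entry N j * dev M i.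
Proof.
move=> NS MS devN i_gt0 j_gt0.
have := top_bot_cross_polar MS NS i_gt0 j_gt0.
move: (devN i i_gt0) (devN j j_gt0); rewrite /dev => /subr0_eq -> /subr0_eq ->.
by move=> /eqP; rewrite -subr_eq0 => /eqP h; apply: subr0_eq; rewrite -h; ring.
Qed.

Lemma dev_M1 (t : 'I_m.+1) : (0 < t)%N -> dev M1 t = 0.
Proof.
move=> t_gt0; rewrite /dev /lam -{1}(mulKf M1i0 (bot_entry M1 t)).
by rewrite (top_bot_cross M1S i0_gt0 t_gt0); ring.
Qed.

Lemma dev_eq0_of M : M \in S ->
  top_entry M2 i0 * dev M j0 = top_entry M2 j0 * dev M i0 ->
  forall t : 'I_m.+1, (0 < t)%N -> dev M t = 0.
Proof.
move=> MS M2dev t t_gt0.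
have M1dev := dev_cross_of M1S MS dev_M1 i0_gt0.
have dev_i0 : dev M i0 = 0 by apply: (cross_eq0 M1i0 M12_indep (M1dev _ j0_gt0)).
by have /eqP := M1dev t t_gt0; rewrite dev_i0 mulr0 mulf_eq0 (negbTE M1i0) => /eqP.
Qed.

Lemma dev_M2 (t : 'I_m.+1) : (0 < t)%N -> dev M2 t = 0.
Proof.
apply: dev_eq0_of => //; have := top_bot_cross M2S i0_gt0 j0_gt0.
by rewrite /dev !mulrBr => ->; ring.
Qed.

Lemma bot_entry_lam M (t : 'I_m.+1) : M \in S -> (0 < t)%N ->
  bot_entry M t = lam * top_entry M t.
Proof.
move=> MS t_gt0; apply: subr0_eq.
exact: (dev_eq0_of MS (dev_cross_of M2S MS dev_M2 i0_gt0 j0_gt0)).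
Qed.

Let Q : 'M[F]_m.+2 := transvection ord_max ord0 lam.

Lemma congr_corner0 M : M \in S -> (Q *m M *m Q^T) ord_max ord_max = 0.
Proof.
suff pivotal N : N \in S -> top_entry N i0 != 0 -> (Q *m N *m Q^T) ord_max ord_max = 0.
  move=> MS; have [Mi0|] := eqVneq (top_entry M i0) 0; last exact: pivotal.
  have := pivotal _ (memvD MS M1S).
  rewrite mulmxDr mulmxDl mxE (pivotal M1) // addr0; apply.
  by rewrite top_entryD Mi0 add0r.
move=> NS Ni0.
have := minor33_rank_le2 ord0 (widen1 i0) ord_max ord0 (widen1 i0) ord_max (S_rank NS).
rewrite S_inner0 // (S_symE (widen1 i0) ord0) // (S_symE (widen1 i0) ord_max) //.
rewrite -/(bot_entry N i0) -/(top_entry N i0) bot_entry_lam // => minor0.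
rewrite /Q transvection_congr_entry eqxx /=.
apply: (mulfI (expf_neq0 2 Ni0)); rewrite mulr0 -oppr0 -minor0 /top_entry; ring.
Qed.

Lemma congr_WS10 : exists2 Q : 'M[F]_m.+2, Q \in unitmx &
  forall M, M \in S -> WS10 (Q *m M *m Q^T).
Proof.
exists Q; first by apply: transvection_unit; rewrite -val_eqE.
move=> M MS; apply/andP; split.
  by rewrite /symmx !trmx_mul trmxK mulmxA (eqP (S_sym MS)).
apply/forallP=> i; apply/forallP=> j; apply/implyP; case/andP.
case: (unliftP ord_max i) => [i'|] ->; case: (unliftP ord_max j) => [j'|] ->;
  rewrite ?lift_max_widen1 => i_gt0 j_gt0; apply/eqP; last exact: congr_corner0.
- rewrite /Q transvection_congr_entry !widen1_neq_max /= S_inner0 //; ring.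
- rewrite /Q transvection_congr_entry widen1_neq_max eqxx /=.
  rewrite (S_symE (widen1 i') ord_max) // (S_symE (widen1 i') ord0) //.
  rewrite -/(bot_entry M i') -/(top_entry M i') bot_entry_lam //; ring.
- rewrite /Q transvection_congr_entry widen1_neq_max eqxx /=.
  rewrite -/(bot_entry M j') -/(top_entry M j') bot_entry_lam //; ring.
Qed.

End Pivot.

End BorderedRankTwo.

Theorem lemma4p7 (F : fieldType) (m : nat) (S : {vspace 'M[F]_m.+1}) :
  (3 <= m.+1)%N ->
  (forall M, M \in S -> symmx M) ->
  (forall M, M \in S -> (\rank M <= 2)%N) ->
  (forall N, N \in Pimg S -> WS10 N) ->
  (2 < \dim (Pimg S))%N ->
  exists2 Q : 'M[F]_m.+1, Q \in unitmx &
    forall M, M \in S -> WS10 (Q *m M *m Q^T).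
Proof.
case: m S => [|m] S; first by [].
move=> _ S_sym S_rank PS_WS dimPS.
have [M1 [M2 [i0 [j0 [M1S M2S /andP[i0_gt0 j0_gt0] M1i0 M12_indep]]]]] :=
  exists_pivot S_sym PS_WS dimPS.
exact: (congr_WS10 S_sym S_rank PS_WS M1S M2S i0_gt0 j0_gt0 M1i0 M12_indep).
Qed.
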